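(* Let $h^{-1}$ and $h_2^{-1}$ be as in the context. Then: (i) for $y>1+e$, $h^{-1}(y)\le 2\,\frac{y-1}{\log(y-1)}$; (ii) for $y>1+e$, $h_2^{-1}(y)\le 2\,\frac{y-1}{\log(y-1)}-1$; (iii) for $c>\sqrt2$ and $0\le y\le 9c^{-2}(c^2/2-1)^2$, $h_2^{-1}(y)\le c\sqrt y$; in particular with $c=2$ this holds for $0\le y\le 9/4$, and with $c=2.2$ it holds for $0\le y\le 1+e$; (iv) for $0<y<\infty$, $$h_2^{-1}(y)\le\begin{cases}2.2\sqrt y, & y\le 1+e,\\[2pt] 2\frac{y-1}{\log(y-1)}-1, & y>1+e.\end{cases}$$
   Context: $h(x)=x(\log x-1)+1$ restricted to $[1,\infty)$ is an increasing bijection onto $[0,\infty)$ with inverse $h^{-1}$; $h_2(x)=h(1+x)=(1+x)\log(1+x)-x$ is an increasing bijection of $[0,\infty)$ onto itself with inverse $h_2^{-1}$. *)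

From Stdlib Require Import Reals Lra ClassicalEpsilon.
Open Scope R_scope.

Definition h (x : R) : R := x * (ln x - 1) + 1.

Definition h2 (x : R) : R := (1 + x) * ln (1 + x) - x.

(* h^{-1} : [0,oo) -> [1,oo): the (unique, since h is an increasing
   bijection [1,oo) -> [0,oo)) x >= 1 with h x = y, chosen by epsilon. *)
Definition hinv (y : R) : R :=
  epsilon (inhabits 0) (fun x => 1 <= x /\ h x = y).

Definition h2inv (y : R) : R :=
  epsilon (inhabits 0) (fun x => 0 <= x /\ h2 x = y).

(* h is strictly increasing on [1, +oo) and h2 x = h (1 + x), so b bounds an
   inverse as soon as y <= h b (resp. y <= h2 b).  For (i) and (ii), with
   u = y - 1 and L = ln u, h (2u/L) - 1 = (u/L) * 2 (L + ln 2 - ln L - 1) >= u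
   because ln (L/2) <= L/2 - 1.  For (iii), Bernstein's lower bound
   h2 t >= t^2 / (2 (1 + t/3)) at t = c sqrt y is at least y exactly when
   c sqrt y <= 3 (c^2/2 - 1).  The numerical instances only need
   e <= (48/29)^2, from the third-order Taylor bound for exp (-1/2). *)

From Stdlib Require Import Reals Lra ClassicalEpsilon.
From Coquelicot Require Import Coquelicot.
Open Scope R_scope.

Lemma nonneg_of_derive_nonneg (f df : R -> R) (x : R) : 0 <= x -> f 0 = 0 ->
  (forall t, 0 <= t <= x -> is_derive f t (df t)) ->
  (forall t, 0 <= t <= x -> 0 <= df t) -> 0 <= f x.
Proof.
  intros Hx Hf0 Hd Hdf.
  destruct (Req_dec x 0) as [->|Hx0]; [lra|].
  destruct (MVT_cor3 f df 0 x) as [c [Hc0 [Hcx Hmvt]]]; [lra| |].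
  - intros t Ht0 Htx. apply is_derive_Reals, Hd. lra.
  - rewrite Hmvt, Hf0. assert (0 <= df c) by (apply Hdf; lra). nra.
Qed.

Lemma ln_le_sub1 x : 0 < x -> ln x <= x - 1.
Proof. intros Hx. pose proof (exp_ineq1_le (ln x)). rewrite exp_ln in *; lra. Qed.

Lemma ln_lt_sub1 x : 0 < x -> x <> 1 -> ln x < x - 1.
Proof.
  intros Hx Hx1. assert (Hln : ln x <> 0).
  { intros H0. apply Hx1. rewrite <- (exp_ln x), H0 by exact Hx. apply exp_0. }
  pose proof (exp_ineq1 (ln x) Hln). rewrite exp_ln in *; lra.
Qed.

Lemma exp_neg_le_taylor2 x : 0 <= x -> exp (- x) <= 1 - x + x ^ 2 / 2.
Proof.
  intros Hx. apply Rminus_le_0.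
  apply (nonneg_of_derive_nonneg (fun t => 1 - t + t ^ 2 / 2 - exp (- t))
           (fun t => exp (- t) - 1 + t)); [exact Hx | | |].
  - cbv beta. rewrite Ropp_0, exp_0. field.
  - intros t _. auto_derive; [easy | field].
  - intros t _. pose proof (exp_ineq1_le (- t)). lra.
Qed.

Lemma taylor3_le_exp_neg x : 0 <= x -> 1 - x + x ^ 2 / 2 - x ^ 3 / 6 <= exp (- x).
Proof.
  intros Hx. apply Rminus_le_0.
  apply (nonneg_of_derive_nonneg (fun t => exp (- t) - (1 - t + t ^ 2 / 2 - t ^ 3 / 6))
           (fun t => 1 - t + t ^ 2 / 2 - exp (- t))); [exact Hx | | |].
  - cbv beta. rewrite Ropp_0, exp_0. field.
  - intros t _. auto_derive; [easy | field].
  - intros t Ht. pose proof (exp_neg_le_taylor2 t (proj1 Ht)). lra.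
Qed.

Lemma exp_1_le : exp 1 <= (48 / 29) ^ 2.
Proof.
  assert (Hhalf : 29 / 48 <= exp (- (1 / 2))).
  { pose proof (taylor3_le_exp_neg (1 / 2)). lra. }
  assert (Hinv : / exp (- (1 / 2)) <= 48 / 29).
  { replace (48 / 29) with (/ (29 / 48)) by field. apply Rinv_le_contravar; lra. }
  assert (He : exp 1 = (/ exp (- (1 / 2))) ^ 2).
  { rewrite <- exp_Ropp, Ropp_involutive. simpl.
    rewrite Rmult_1_r, <- exp_plus. f_equal. lra. }
  rewrite He. pose proof (Rinv_0_lt_compat _ (exp_pos (- (1 / 2)))). simpl. nra.
Qed.

Lemma ln1p_ge_rational t : 0 <= t -> 3 * t * (6 + t) / (2 * (3 + t) ^ 2) <= ln (1 + t).
Proof.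
  intros Ht. apply Rminus_le_0.
  apply (nonneg_of_derive_nonneg (fun x => ln (1 + x) - 3 * x * (6 + x) / (2 * (3 + x) ^ 2))
           (fun x => x ^ 2 * (9 + x) / ((1 + x) * (3 + x) ^ 3))); [exact Ht | | |].
  - cbv beta. rewrite Rplus_0_r, ln_1. field.
  - intros x Hx. auto_derive; [repeat split; nra | field; lra].
  - intros x Hx. apply Rdiv_le_0_compat.
    + apply Rmult_le_pos; [apply pow2_ge_0 | lra].
    + apply Rmult_lt_0_compat; [lra | apply pow_lt; lra].
Qed.

Lemma bernstein_le_h2 t : 0 <= t -> 3 * t ^ 2 / (2 * (3 + t)) <= h2 t.
Proof.
  intros Ht. apply Rminus_le_0. unfold h2.
  apply (nonneg_of_derive_nonneg (fun x => (1 + x) * ln (1 + x) - x - 3 * x ^ 2 / (2 * (3 + x)))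
           (fun x => ln (1 + x) - 3 * x * (6 + x) / (2 * (3 + x) ^ 2))); [exact Ht | | |].
  - cbv beta. rewrite Rplus_0_r, ln_1. field.
  - intros x Hx. auto_derive; [repeat split; nra | field; lra].
  - intros x Hx. pose proof (ln1p_ge_rational x (proj1 Hx)). lra.
Qed.

Lemma h_increasing a b : 1 <= a -> a < b -> h a < h b.
Proof.
  intros Ha Hab. unfold h.
  assert (Hlog : ln a - ln b < a / b - 1).
  { rewrite <- ln_div by lra. apply ln_lt_sub1.
    - apply Rdiv_lt_0_compat; lra.
    - intros Habs. assert (a = b) by (rewrite <- (Rmult_1_l b), <- Habs; field; lra). lra. }
  assert (Hgap : b - a < b * (ln b - ln a)).
  { replace (b - a) with (- (b * (a / b - 1))) by (field; lra). nra. }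
  assert (0 <= ln a) by (rewrite <- ln_1; apply ln_le; lra).
  nra.
Qed.

Lemma h_le_cancel a b : 1 <= b -> h a <= h b -> a <= b.
Proof.
  intros Hb Hab. destruct (Rle_lt_dec a b) as [|Hba]; [assumption|].
  pose proof (h_increasing b a Hb Hba). lra.
Qed.

Lemma h2_eq_h x : h2 x = h (1 + x).
Proof. unfold h2, h. ring. Qed.

Lemma h_continuous x : 1 <= x -> continuity_pt h x.
Proof.
  intros Hx. apply derivable_continuous_pt. exists (ln x).
  apply is_derive_Reals. unfold h. auto_derive; [lra | field; lra].
Qed.

Lemma h_onto y : 0 <= y -> exists x, 1 <= x /\ h x = y.
Proof.
  intros Hy. destruct (Req_dec y 0) as [->|Hy0].
  { exists 1. split; [lra|]. unfold h. rewrite ln_1. ring. }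
  set (X := exp 2 + y).
  assert (HX : 1 < X) by (unfold X; pose proof (exp_ineq1_le 2); lra).
  assert (HlnX : 2 <= ln X).
  { rewrite <- (ln_exp 2). apply ln_le; [apply exp_pos | unfold X; lra]. }
  destruct (Ranalysis5.IVT_interv (fun x => h x - y) 1 X) as [z [Hz Hhz]].
  - intros x Hx. apply continuity_pt_minus.
    + apply h_continuous. lra.
    + apply continuity_pt_const. intros ? ?. reflexivity.
  - exact HX.
  - unfold h. rewrite ln_1. lra.
  - unfold h. pose proof (exp_pos 2). unfold X in *. nra.
  - exists z. split; lra.
Qed.

Lemma hinv_spec y : 0 <= y -> 1 <= hinv y /\ h (hinv y) = y.
Proof. intros Hy. unfold hinv. apply epsilon_spec, h_onto, Hy. Qed.

Lemma h2inv_spec y : 0 <= y -> 0 <= h2inv y /\ h2 (h2inv y) = y.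
Proof.
  intros Hy. unfold h2inv. apply epsilon_spec.
  destruct (h_onto y Hy) as [x [Hx Hhx]]. exists (x - 1).
  rewrite h2_eq_h. replace (1 + (x - 1)) with x by ring. split; [lra | exact Hhx].
Qed.

Lemma hinv_le y b : 0 <= y -> 1 <= b -> y <= h b -> hinv y <= b.
Proof.
  intros Hy Hb Hyb. destruct (hinv_spec y Hy) as [_ Hh].
  apply h_le_cancel; [exact Hb | lra].
Qed.

Lemma h2inv_le y b : 0 <= y -> 0 <= b -> y <= h2 b -> h2inv y <= b.
Proof.
  intros Hy Hb Hyb. destruct (h2inv_spec y Hy) as [_ Hh]. rewrite h2_eq_h in *.
  enough (1 + h2inv y <= 1 + b) by lra.
  apply h_le_cancel; lra.
Qed.

Lemma h_two_div_ln_ge u : 1 < u -> 1 <= 2 * (u / ln u) /\ 1 + u <= h (2 * (u / ln u)).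
Proof.
  intros Hu. set (L := ln u).
  assert (HL : 0 < L) by (unfold L; rewrite <- ln_1; apply ln_increasing; lra).
  assert (HLu : L <= u - 1) by (apply ln_le_sub1; lra).
  assert (HL2 : ln L - ln 2 <= L / 2 - 1) by (rewrite <- ln_div by lra; apply ln_le_sub1; lra).
  assert (HuL : 0 < u / L) by (apply Rdiv_lt_0_compat; lra).
  split.
  - apply Rmult_le_reg_r with L; [exact HL|]. unfold Rdiv. field_simplify; lra.
  - assert (Hln : ln (2 * (u / L)) = ln 2 + L - ln L).
    { rewrite ln_mult, ln_div by lra. fold L. ring. }
    unfold h. rewrite Hln.
    replace (2 * (u / L) * (ln 2 + L - ln L - 1) + 1)
      with (u / L * (2 * (ln 2 + L - ln L - 1)) + 1) by ring.
    assert (Hu_eq : u / L * L = u) by (field; lra).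
    nra.
Qed.

Lemma hinv_le_log_bound y : 2 < y -> hinv y <= 2 * ((y - 1) / ln (y - 1)).
Proof.
  intros Hy. destruct (h_two_div_ln_ge (y - 1)) as [Hb Hhb]; [lra|].
  apply hinv_le; lra.
Qed.

Lemma h2inv_le_log_bound y : 2 < y -> h2inv y <= 2 * ((y - 1) / ln (y - 1)) - 1.
Proof.
  intros Hy. destruct (h_two_div_ln_ge (y - 1)) as [Hb Hhb]; [lra|].
  apply h2inv_le; [lra | lra |].
  rewrite h2_eq_h. replace (1 + _) with (2 * ((y - 1) / ln (y - 1))) by ring. lra.
Qed.

Lemma h2inv_le_mul_sqrt c y : 0 < c -> 0 <= y -> c * sqrt y <= 3 * (c ^ 2 / 2 - 1) ->
  h2inv y <= c * sqrt y.
Proof.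
  intros Hc Hy Hcy. set (s := sqrt y).
  assert (Hs : 0 <= s) by apply sqrt_pos.
  assert (Hss : y = s ^ 2) by (unfold s; simpl; rewrite Rmult_1_r, sqrt_sqrt; lra).
  apply h2inv_le; [exact Hy | nra |].
  eapply Rle_trans; [| apply bernstein_le_h2; nra].
  apply Rle_div_r; [nra|]. rewrite Hss. fold s in Hcy. nra.
Qed.

Lemma h2inv_le_mul_sqrt_range c y : sqrt 2 < c -> 0 <= y ->
  y <= 9 * / (c ^ 2) * (c ^ 2 / 2 - 1) ^ 2 -> h2inv y <= c * sqrt y.
Proof.
  intros Hc Hy Hyc.
  assert (Hc2 : 2 < c ^ 2).
  { pose proof (sqrt_pos 2). pose proof (sqrt_sqrt 2). simpl. nra. }
  assert (Hc0 : 0 < c) by (pose proof (sqrt_pos 2); lra).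
  apply h2inv_le_mul_sqrt; [exact Hc0 | exact Hy |].
  assert (Hsq : (c * sqrt y) ^ 2 <= (3 * (c ^ 2 / 2 - 1)) ^ 2).
  { rewrite Rpow_mult_distr, pow2_sqrt by exact Hy.
    replace ((3 * (c ^ 2 / 2 - 1)) ^ 2) with (c ^ 2 * (9 * / (c ^ 2) * (c ^ 2 / 2 - 1) ^ 2))
      by (field; lra).
    apply Rmult_le_compat_l; [lra | exact Hyc]. }
  pose proof (sqrt_pos y). nra.
Qed.

Lemma sqrt2_lt_2 : sqrt 2 < 2.
Proof. pose proof (sqrt_pos 2). pose proof (sqrt_sqrt 2). nra. Qed.

Lemma h2inv_le_2_sqrt y : 0 <= y -> y <= 9 / 4 -> h2inv y <= 2 * sqrt y.
Proof.
  intros Hy Hy4. apply h2inv_le_mul_sqrt_range; [exact sqrt2_lt_2 | exact Hy |].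
  replace (9 * / (2 ^ 2) * (2 ^ 2 / 2 - 1) ^ 2) with (9 / 4) by field. exact Hy4.
Qed.

Lemma h2inv_le_22_sqrt y : 0 <= y -> y <= 1 + exp 1 -> h2inv y <= 22 / 10 * sqrt y.
Proof.
  intros Hy Hye. apply h2inv_le_mul_sqrt_range; [pose proof sqrt2_lt_2; lra | exact Hy |].
  replace (9 * / ((22 / 10) ^ 2) * ((22 / 10) ^ 2 / 2 - 1) ^ 2) with (9 * 5041 / 12100)
    by field.
  pose proof exp_1_le. lra.
Qed.

Theorem lemma15 :
  (* (i) *)
  (forall y : R, 1 + exp 1 < y -> hinv y <= 2 * ((y - 1) / ln (y - 1))) /\
  (* (ii) *)
  (forall y : R, 1 + exp 1 < y -> h2inv y <= 2 * ((y - 1) / ln (y - 1)) - 1) /\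
  (* (iii) general c *)
  (forall c y : R, sqrt 2 < c -> 0 <= y ->
     y <= 9 * / (c ^ 2) * (c ^ 2 / 2 - 1) ^ 2 -> h2inv y <= c * sqrt y) /\
  (* (iii) c = 2 *)
  (forall y : R, 0 <= y -> y <= 9 / 4 -> h2inv y <= 2 * sqrt y) /\
  (* (iii) c = 2.2 *)
  (forall y : R, 0 <= y -> y <= 1 + exp 1 -> h2inv y <= 22 / 10 * sqrt y) /\
  (* (iv) *)
  (forall y : R, 0 < y ->
     (y <= 1 + exp 1 -> h2inv y <= 22 / 10 * sqrt y) /\
     (1 + exp 1 < y -> h2inv y <= 2 * ((y - 1) / ln (y - 1)) - 1)).
Proof.
  assert (He : 2 <= 1 + exp 1) by (pose proof (exp_ineq1_le 1); lra).
  split; [intros y Hy; apply hinv_le_log_bound; lra |].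
  split; [intros y Hy; apply h2inv_le_log_bound; lra |].
  split; [exact h2inv_le_mul_sqrt_range |].
  split; [exact h2inv_le_2_sqrt |].
  split; [exact h2inv_le_22_sqrt |].
  intros y Hy. split.
  - apply h2inv_le_22_sqrt; lra.
  - intros Hye. apply h2inv_le_log_bound; lra.
Qed.
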